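(* Let $V\in L^1(\mathbb{R})$ (so $\widehat V\in L^\infty$), $s\ge1$, $N>1$. On $\Gamma_4=\{(\xi_1,\dots,\xi_4)\in\mathbb{R}^4:\xi_1+\xi_2+\xi_3+\xi_4=0\}$ define $$\Psi:=c\,\frac{\big((\theta(\xi_1))^2-(\theta(\xi_2))^2+(\theta(\xi_3))^2-(\theta(\xi_4))^2\big)\widehat V(\xi_3+\xi_4)}{\xi_1^2-\xi_2^2+\xi_3^2-\xi_4^2}$$ when the denominator is nonzero and $\Psi:=0$ otherwise, where $c$ is a fixed real constant. Suppose $|\xi_j|\sim N_j$ for dyadic integers $N_j\ge1$, $j=1,\dots,4$, and let $N_1^*\ge N_2^*\ge N_3^*\ge N_4^*$ be the decreasing rearrangement of $N_1,\dots,N_4$. Then, with implicit constants independent of $N$: (i) if $N_2^*\gg N_3^*$, then $|\Psi|\lesssim\frac{1}{(N_1^* )^2}\theta(N_1^* )\theta(N_2^* )$; (ii) if $N_2^*\sim N_3^*$, then $|\Psi|\lesssim\frac{1}{(N_1^* )^3}\theta(N_1^* )\theta(N_2^* )N_3^*N_4^*$.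
   Context: $\theta(\xi)=\theta_0(\xi/N)$, where $\theta_0$ is a fixed even smooth function, non-decreasing on $[0,\infty)$, with $\theta_0(\xi)=|\xi|^s$ for $|\xi|\ge2$ and $\theta_0(\xi)=1$ for $|\xi|\le1$. Dyadic localization $|\xi_j|\sim N_j$ means $N_j/2\le|\xi_j|\le2N_j$ (with $|\xi_j|\lesssim1$ when $N_j=1$). On $\Gamma_4$ necessarily $N_1^*\sim N_2^*$. *)

From Stdlib Require Import Reals Lra List Permutation.
Open Scope R_scope.

Definition smooth (f : R -> R) : Prop :=
  exists D : nat -> R -> R, D O = f /\
    forall (n : nat) (x : R), derivable_pt_lim (D n) x (D (S n) x).

Definition admissible_theta0 (s : R) (th0 : R -> R) : Prop :=
  smooth th0 /\
  (forall x, th0 (- x) = th0 x) /\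
  (forall x y, 0 <= x -> x <= y -> th0 x <= th0 y) /\
  (forall x, 2 <= Rabs x -> th0 x = Rpower (Rabs x) s) /\
  (forall x, Rabs x <= 1 -> th0 x = 1).

Definition theta (th0 : R -> R) (N x : R) : R := th0 (x / N).

(* The real multiplier of Vhat(xi3+xi4) in Psi (0 when the denominator vanishes). *)
Definition Psi_mult (th0 : R -> R) (c N x1 x2 x3 x4 : R) : R :=
  let d := x1 ^ 2 - x2 ^ 2 + x3 ^ 2 - x4 ^ 2 in
  if Req_EM_T d 0 then 0
  else c * ((theta th0 N x1) ^ 2 - (theta th0 N x2) ^ 2
            + (theta th0 N x3) ^ 2 - (theta th0 N x4) ^ 2) / d.

(* |Psi|, where Vhat is complex-valued, given by its real and imaginary parts. *)
Definition Psi_abs (th0 : R -> R) (c N : R) (Vre Vim : R -> R)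
    (x1 x2 x3 x4 : R) : R :=
  let m := Psi_mult th0 c N x1 x2 x3 x4 in
  sqrt ((m * Vre (x3 + x4)) ^ 2 + (m * Vim (x3 + x4)) ^ 2).

(* Dyadic localization |x| ~ 2^k: 2^k/2 <= |x| <= 2*2^k, and |x| <= 2 for k = 0. *)
Definition dyadic_loc (k : nat) (x : R) : Prop :=
  match k with
  | O => Rabs x <= 2
  | S _ => 2 ^ k / 2 <= Rabs x <= 2 * 2 ^ k
  end.

From Stdlib Require Import Reals Lra Psatz List Permutation.
Open Scope R_scope.

(* On Gamma_4 the denominator factors as 2ab with a = xi1 + xi2, b = xi1 + xi4, and since
   theta is even the numerator is the second difference
   f(xi1) - f(xi1 - a) - f(xi1 - b) + f(xi1 - a - b) of f = theta^2.  Two applications of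
   the mean value theorem turn it into a b f''(e) with |e| <= 2 M1, so |Psi| is controlled
   by sup |f''| = sup |(theta_0^2)''(. / N)| / N^2, and (theta_0^2)'' is bounded near 0 and
   equals 2s(2s-1)|u|^(2s-2) for |u| > 2; hence |Psi| <~ theta(B)^2 / B^2 with B = 2 M1.
   The largest frequency is at most the sum of the other three, so M1 <= 16 M2, and the
   doubling bound theta_0(2u) <= 4^s theta_0(u) gives theta(2 M1)^2 <~ theta(M1) theta(M2).
   This is (i), even without M2 >> M3; (ii) follows since M1 <~ M2 ~ M3 <= M3 M4. *)

Lemma Rabs_le_inv (x b : R) : Rabs x <= b -> - b <= x <= b.
Proof.
  intros H. pose proof (Rle_abs x). pose proof (Rle_abs (- x)).
  rewrite Rabs_Ropp in *. lra.
Qed.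

Lemma Rpower_ge1 (x y : R) : 1 <= x -> 0 <= y -> 1 <= Rpower x y.
Proof.
  intros Hx Hy. rewrite <- (Rpower_O x) by lra. now apply Rle_Rpower.
Qed.

Lemma MVT_between (f f' : R -> R) (p q : R) :
  (forall x, derivable_pt_lim f x (f' x)) ->
  exists c, (p <= c <= q \/ q <= c <= p) /\ f q - f p = f' c * (q - p).
Proof.
  intros Hf. destruct (Rtotal_order p q) as [Hpq | [-> | Hqp]].
  - destruct (MVT_cor2 f f' p q Hpq (fun c _ => Hf c)) as [c [E Hc]].
    exists c. split; [left; lra | exact E].
  - exists q. split; [left; lra | ring].
  - destruct (MVT_cor2 f f' q p Hqp (fun c _ => Hf c)) as [c [E Hc]].
    exists c. split; [right; lra | lra].
Qed.

Lemma derivable_pt_lim_shift (f : R -> R) (b x l : R) :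
  derivable_pt_lim f (x - b) l -> derivable_pt_lim (fun t => f (t - b)) x l.
Proof.
  intros Hf eps Heps. destruct (Hf eps Heps) as [d Hd].
  exists d. intros h Hh Hhd.
  replace (x + h - b) with (x - b + h) by ring. now apply Hd.
Qed.

Lemma second_difference_mean_value (f f1 f2 : R -> R) (x a b B : R) :
  (forall y, derivable_pt_lim f y (f1 y)) ->
  (forall y, derivable_pt_lim f1 y (f2 y)) ->
  Rabs x <= B -> Rabs (x - a) <= B -> Rabs (x - b) <= B -> Rabs (x - a - b) <= B ->
  exists e, Rabs e <= B /\
    f x - f (x - a) - f (x - b) + f (x - a - b) = a * b * f2 e.
Proof.
  intros Hf Hf1 H1 H2 H3 H4.
  apply Rabs_le_inv in H1, H2, H3, H4.
  assert (Hk : forall t, derivable_pt_lim (fun t => f t - f (t - b)) t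
                                          (f1 t - f1 (t - b))).
  { intros t. apply (derivable_pt_lim_minus f (fun t => f (t - b))); [apply Hf |].
    apply derivable_pt_lim_shift, Hf. }
  destruct (MVT_between _ _ (x - a) x Hk) as [c [Hc Ec]].
  destruct (MVT_between f1 f2 (c - b) c Hf1) as [e [He Ee]].
  exists e. split.
  - apply Rabs_le. destruct Hc, He; lra.
  - transitivity ((f1 c - f1 (c - b)) * (x - (x - a))).
    + rewrite <- Ec. ring.
    + rewrite Ee. ring.
Qed.

Lemma derivable_pt_lim_reflect (f g : R -> R) (sigma : R) :
  (forall x, f (- x) = sigma * f x) ->
  (forall x, derivable_pt_lim f x (g x)) ->
  forall x, g (- x) = - sigma * g x.
Proof.
  intros Hf Hg x.
  assert (Hl : derivable_pt_lim (fun y => f (- y)) x (g (- x) * -1)).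
  { apply (derivable_pt_lim_comp (fun y => - y) f); [| apply Hg].
    exact (derivable_pt_lim_opp _ _ _ (derivable_pt_lim_id x)). }
  assert (Hr : derivable_pt_lim (fun y => f (- y)) x (sigma * g x)).
  { apply (derivable_pt_lim_ext (mult_real_fct sigma f)).
    - intros y. unfold mult_real_fct. now rewrite Hf.
    - apply derivable_pt_lim_scal, Hg. }
  pose proof (uniqueness_limite _ _ _ _ Hl Hr). lra.
Qed.

Lemma Gamma4_denominator (x1 x2 x3 x4 : R) :
  x1 + x2 + x3 + x4 = 0 ->
  x1 ^ 2 - x2 ^ 2 + x3 ^ 2 - x4 ^ 2 = 2 * ((x1 + x2) * (x1 + x4)).
Proof. intros H. replace x3 with (- x1 - x2 - x4) by lra. ring. Qed.

Lemma Psi_abs_le_mult (th0 : R -> R) (c N : R) (Vre Vim : R -> R) (M x1 x2 x3 x4 : R) :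
  (forall x, sqrt (Vre x ^ 2 + Vim x ^ 2) <= M) ->
  Psi_abs th0 c N Vre Vim x1 x2 x3 x4 <= Rabs (Psi_mult th0 c N x1 x2 x3 x4) * M.
Proof.
  intros HV. unfold Psi_abs. set (m := Psi_mult th0 c N x1 x2 x3 x4).
  replace ((m * Vre (x3 + x4)) ^ 2 + (m * Vim (x3 + x4)) ^ 2)
    with (Rsqr m * (Vre (x3 + x4) ^ 2 + Vim (x3 + x4) ^ 2)) by (unfold Rsqr; ring).
  rewrite sqrt_mult_alt, sqrt_Rsqr_abs by apply Rle_0_sqr.
  apply Rmult_le_compat_l; [apply Rabs_pos | apply HV].
Qed.

Section Theta0.

Variables (s : R) (th0 : R -> R).
Hypotheses (Hs : 1 <= s) (Hadm : admissible_theta0 s th0).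

Lemma theta0_even (x : R) : th0 (- x) = th0 x.
Proof. destruct Hadm as (_ & H & _). apply H. Qed.

Lemma theta0_mono (x y : R) : 0 <= x -> x <= y -> th0 x <= th0 y.
Proof. destruct Hadm as (_ & _ & H & _). apply H. Qed.

Lemma theta0_pow (x : R) : 2 < x -> th0 x = Rpower x s.
Proof.
  intros Hx. destruct Hadm as (_ & _ & _ & H & _).
  rewrite H; rewrite Rabs_right; lra.
Qed.

Lemma theta0_ge1 (x : R) : 1 <= th0 x.
Proof.
  destruct Hadm as (_ & _ & _ & _ & Hone).
  rewrite <- (Hone 0) by (rewrite Rabs_R0; lra).
  destruct (Rle_dec 0 x).
  - apply theta0_mono; lra.
  - rewrite <- (theta0_even x). apply theta0_mono; lra.
Qed.

Lemma theta0_double (x : R) : 0 <= x -> th0 (2 * x) <= Rpower 4 s * th0 x.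
Proof.
  intros Hx. pose proof (theta0_ge1 x). pose proof (Rpower_ge1 4 s ltac:(lra) ltac:(lra)).
  destruct (Rle_dec x 2).
  - apply Rle_trans with (th0 4); [apply theta0_mono; lra |].
    rewrite (theta0_pow 4) by lra. nra.
  - rewrite !theta0_pow by lra. rewrite <- Rpower_mult_distr by lra.
    apply Rmult_le_compat_r; [left; apply exp_pos |].
    apply Rle_Rpower_l; lra.
Qed.

Lemma theta0_pow2_mul (n : nat) (x : R) :
  0 <= x -> th0 (2 ^ n * x) <= Rpower 4 s ^ n * th0 x.
Proof.
  intros Hx. pose proof (Rpower_ge1 4 s ltac:(lra) ltac:(lra)).
  induction n as [| n IH]; simpl.
  - rewrite !Rmult_1_l. lra.
  - rewrite Rmult_assoc, Rmult_assoc.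
    apply Rle_trans with (Rpower 4 s * th0 (2 ^ n * x)).
    + apply theta0_double. pose proof (pow_le 2 n ltac:(lra)). nra.
    + apply Rmult_le_compat_l; lra.
Qed.

Lemma theta0_sq_ratio_pow (U : R) : 2 < U -> th0 U ^ 2 / U ^ 2 = Rpower U (2 * s - 2).
Proof.
  intros HU. rewrite theta0_pow by lra.
  replace (Rpower U s ^ 2) with (Rpower U (2 * s - 2) * Rpower U 1 * Rpower U 1)
    by (rewrite <- !Rpower_plus; simpl; rewrite Rmult_1_r, <- Rpower_plus; f_equal; ring).
  rewrite Rpower_1 by lra. field. lra.
Qed.

Lemma theta0_sq_ratio_ge (U : R) : 0 < U -> / 9 <= th0 U ^ 2 / U ^ 2.
Proof.
  intros HU. destruct (Rle_dec U 3).
  - pose proof (theta0_ge1 U).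
    apply Rmult_le_reg_r with (U ^ 2); [nra |].
    unfold Rdiv. rewrite Rmult_assoc, Rinv_l by nra. nra.
  - rewrite theta0_sq_ratio_pow by lra.
    pose proof (Rpower_ge1 U (2 * s - 2) ltac:(lra) ltac:(lra)). lra.
Qed.

Section Derivatives.

Variable D : nat -> R -> R.
Hypotheses (HD0 : D O = th0) (HD : forall n x, derivable_pt_lim (D n) x (D (S n) x)).

Definition theta0_sq_d2 (u : R) : R := 2 * (D 1 u * D 1 u + th0 u * D 2 u).

Lemma derivable_theta0_sq (x : R) :
  derivable_pt_lim (fun u => th0 u ^ 2) x (2 * th0 x * D 1 x).
Proof.
  apply (derivable_pt_lim_ext (mult_fct (D 0) (D 0))).
  - intros u. unfold mult_fct. rewrite HD0. ring.
  - replace (2 * th0 x * D 1 x) with (D 1 x * D 0 x + D 0 x * D 1 x)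
      by (rewrite HD0; ring).
    apply derivable_pt_lim_mult; apply HD.
Qed.

Lemma derivable_theta0_sq_d1 (x : R) :
  derivable_pt_lim (fun u => 2 * th0 u * D 1 u) x (theta0_sq_d2 x).
Proof.
  apply (derivable_pt_lim_ext (mult_real_fct 2 (mult_fct (D 0) (D 1)))).
  - intros u. unfold mult_real_fct, mult_fct. rewrite HD0. ring.
  - unfold theta0_sq_d2. rewrite <- HD0.
    apply derivable_pt_lim_scal.
    apply derivable_pt_lim_mult; apply HD.
Qed.

Lemma theta0_D1_pow (u : R) : 2 < u -> D 1 u = s * Rpower u (s - 1).
Proof.
  intros Hu. apply (uniqueness_limite (D 0) u); [apply HD |].
  apply (derivable_pt_lim_locally_ext (fun y => Rpower y s) _ u 2 (u + 1)); [lra | |].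
  - intros z Hz. rewrite HD0, theta0_pow; lra.
  - apply derivable_pt_lim_power. lra.
Qed.

Lemma theta0_D2_pow (u : R) : 2 < u -> D 2 u = s * ((s - 1) * Rpower u (s - 1 - 1)).
Proof.
  intros Hu. apply (uniqueness_limite (D 1) u); [apply HD |].
  apply (derivable_pt_lim_locally_ext
           (mult_real_fct s (fun y => Rpower y (s - 1))) _ u 2 (u + 1)); [lra | |].
  - intros z Hz. unfold mult_real_fct. rewrite theta0_D1_pow; lra.
  - apply derivable_pt_lim_scal, derivable_pt_lim_power. lra.
Qed.

Lemma theta0_sq_d2_pow (u : R) :
  2 < u -> theta0_sq_d2 u = 2 * s * (2 * s - 1) * Rpower u (2 * s - 2).
Proof.
  intros Hu. unfold theta0_sq_d2.
  rewrite theta0_D1_pow, theta0_D2_pow, theta0_pow by lra.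
  assert (E1 : Rpower u (2 * s - 2) = Rpower u (s - 1) * Rpower u (s - 1))
    by (rewrite <- Rpower_plus; f_equal; ring).
  assert (E2 : Rpower u s * Rpower u (s - 1 - 1) = Rpower u (s - 1) * Rpower u (s - 1))
    by (rewrite <- !Rpower_plus; f_equal; ring).
  transitivity (2 * (s * s * (Rpower u (s - 1) * Rpower u (s - 1))
                     + s * (s - 1) * (Rpower u s * Rpower u (s - 1 - 1)))); [ring |].
  rewrite E1, E2. ring.
Qed.

Lemma theta0_sq_d2_even (u : R) : theta0_sq_d2 (- u) = theta0_sq_d2 u.
Proof.
  assert (H1 : forall x, D 1 (- x) = - D 1 x).
  { intros x. rewrite (derivable_pt_lim_reflect (D 0) (D 1) 1); [ring | | apply HD].
    intros y. rewrite HD0, theta0_even. ring. }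
  assert (H2 : forall x, D 2 (- x) = D 2 x).
  { intros x. rewrite (derivable_pt_lim_reflect (D 1) (D 2) (-1)); [ring | | apply HD].
    intros y. rewrite H1. ring. }
  unfold theta0_sq_d2. rewrite H1, H2, theta0_even. ring.
Qed.

Lemma theta0_sq_d2_bounded_on_compact :
  exists H, 0 <= H /\ forall u, Rabs u <= 3 -> Rabs (theta0_sq_d2 u) <= H.
Proof.
  assert (Hc : forall n x, continuity_pt (D n) x).
  { intros n x. apply derivable_continuous_pt. exists (D (S n) x). apply HD. }
  destruct (continuity_ab_maj (fun u => Rabs (theta0_sq_d2 u)) (-3) 3) as [m [Hm _]];
    [lra | |].
  - intros x _. apply (continuity_pt_comp theta0_sq_d2 Rabs); [| apply Rcontinuity_abs].
    unfold theta0_sq_d2. rewrite <- HD0.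
    apply (continuity_pt_scal (plus_fct (mult_fct (D 1) (D 1)) (mult_fct (D 0) (D 2)))).
    apply continuity_pt_plus; apply continuity_pt_mult; apply Hc.
  - exists (Rabs (theta0_sq_d2 m)). split; [apply Rabs_pos |].
    intros u Hu. apply Hm, Rabs_le_inv, Hu.
Qed.

Lemma theta0_sq_d2_bound :
  exists C0, 0 <= C0 /\ forall u U, 0 < U -> Rabs u <= U ->
    Rabs (theta0_sq_d2 u) <= C0 * (th0 U ^ 2 / U ^ 2).
Proof.
  destruct theta0_sq_d2_bounded_on_compact as [H [HH Hb]].
  set (A := 2 * s * (2 * s - 1)).
  assert (HA : 0 <= A) by (unfold A; nra).
  exists (9 * H + A). split; [lra |].
  intros u U HU Hu. pose proof (theta0_sq_ratio_ge U HU).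
  destruct (Rle_dec (Rabs u) 3).
  - pose proof (Hb u r). nra.
  - assert (Eu : theta0_sq_d2 u = theta0_sq_d2 (Rabs u)).
    { unfold Rabs. destruct (Rcase_abs u); [now rewrite theta0_sq_d2_even | reflexivity]. }
    rewrite Eu, theta0_sq_d2_pow, theta0_sq_ratio_pow by lra. fold A.
    assert (Rpower (Rabs u) (2 * s - 2) <= Rpower U (2 * s - 2))
      by (apply Rle_Rpower_l; lra).
    assert (0 < Rpower U (2 * s - 2)) by apply exp_pos.
    rewrite Rabs_right by (apply Rle_ge, Rmult_le_pos; [lra | left; apply exp_pos]).
    nra.
Qed.

End Derivatives.

Lemma theta_even (N x : R) : 0 < N -> theta th0 N (- x) = theta th0 N x.
Proof.
  intros HN. unfold theta. replace (- x / N) with (- (x / N)) by (field; lra).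
  apply theta0_even.
Qed.

Lemma theta_ge1 (N x : R) : 1 <= theta th0 N x.
Proof. apply theta0_ge1. Qed.

Lemma theta_mono (N x y : R) : 0 < N -> 0 <= x -> x <= y -> theta th0 N x <= theta th0 N y.
Proof.
  intros HN Hx Hxy. apply theta0_mono; unfold Rdiv.
  - apply Rmult_le_pos; [lra | left; apply Rinv_0_lt_compat; lra].
  - apply Rmult_le_compat_r; [left; apply Rinv_0_lt_compat |]; lra.
Qed.

Lemma theta_pow2_mul (N x : R) (n : nat) :
  0 < N -> 0 <= x -> theta th0 N (2 ^ n * x) <= Rpower 4 s ^ n * theta th0 N x.
Proof.
  intros HN Hx. unfold theta. replace (2 ^ n * x / N) with (2 ^ n * (x / N)) by (field; lra).
  apply theta0_pow2_mul. unfold Rdiv.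
  apply Rmult_le_pos; [lra | left; apply Rinv_0_lt_compat; lra].
Qed.

Lemma theta_double_sq_le (N M1 M2 : R) :
  0 < N -> 0 <= M2 -> M2 <= M1 -> M1 <= 2 ^ 4 * M2 ->
  theta th0 N (2 * M1) ^ 2 <= Rpower 4 s ^ 6 * (theta th0 N M1 * theta th0 N M2).
Proof.
  intros HN HM2 H21 Htop.
  pose proof (theta_ge1 N M1). pose proof (theta_ge1 N (2 * M1)).
  set (Q := Rpower 4 s). assert (HQ : 1 <= Q) by (apply Rpower_ge1; lra).
  assert (Hd1 : theta th0 N (2 * M1) <= Q * theta th0 N M1).
  { replace (2 * M1) with (2 ^ 1 * M1) by ring. replace Q with (Q ^ 1) by ring.
    apply theta_pow2_mul; lra. }
  assert (Hd4 : theta th0 N M1 <= Q ^ 4 * theta th0 N M2).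
  { apply Rle_trans with (theta th0 N (2 ^ 4 * M2)).
    - apply theta_mono; lra.
    - apply theta_pow2_mul; lra. }
  apply Rle_trans with ((Q * theta th0 N M1) ^ 2); [apply pow_incr; lra |].
  replace ((Q * theta th0 N M1) ^ 2) with (Q ^ 2 * theta th0 N M1 * theta th0 N M1) by ring.
  replace (Q ^ 6 * (theta th0 N M1 * theta th0 N M2))
    with (Q ^ 2 * theta th0 N M1 * (Q ^ 4 * theta th0 N M2)) by ring.
  apply Rmult_le_compat_l; [pose proof (pow_le Q 2 ltac:(lra)); nra | exact Hd4].
Qed.

Lemma theta_sq_second_difference :
  exists C0, 0 <= C0 /\ forall N x a b B, 0 < N -> 0 < B ->
    Rabs x <= B -> Rabs (x - a) <= B -> Rabs (x - b) <= B -> Rabs (x - a - b) <= B ->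
    Rabs (theta th0 N x ^ 2 - theta th0 N (x - a) ^ 2
          - theta th0 N (x - b) ^ 2 + theta th0 N (x - a - b) ^ 2)
      <= C0 * Rabs (a * b) * (theta th0 N B ^ 2 / B ^ 2).
Proof.
  destruct Hadm as [[D [HD0 HD]] _].
  destruct (theta0_sq_d2_bound D HD0 HD) as [C0 [HC0 Hb]].
  exists C0. split; [exact HC0 |].
  intros N x a b B HN HB H1 H2 H3 H4.
  assert (Hscale : forall y, Rabs y <= B -> Rabs (y / N) <= B / N).
  { intros y Hy. unfold Rdiv. rewrite Rabs_mult, (Rabs_right (/ N))
      by (apply Rle_ge; left; apply Rinv_0_lt_compat; lra).
    apply Rmult_le_compat_r; [left; apply Rinv_0_lt_compat; lra | exact Hy]. }
  assert (Ediv : forall y z, (y - z) / N = y / N - z / N) by (intros; field; lra).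
  destruct (second_difference_mean_value (fun u => th0 u ^ 2) _ _ (x / N) (a / N) (b / N) (B / N)
              (derivable_theta0_sq D HD0 HD) (derivable_theta0_sq_d1 D HD0 HD))
    as [e [He Ee]];
    try (rewrite <- ?Ediv; apply Hscale; assumption).
  unfold theta. rewrite !Ediv, Ee.
  assert (HBN : 0 < B / N) by (apply Rdiv_lt_0_compat; lra).
  pose proof (Hb e (B / N) HBN He) as Hq.
  replace (a / N * (b / N) * theta0_sq_d2 D e) with (a * b * / N ^ 2 * theta0_sq_d2 D e)
    by (field; lra).
  replace (C0 * Rabs (a * b) * (th0 (B / N) ^ 2 / B ^ 2))
    with (Rabs (a * b) * / N ^ 2 * (C0 * (th0 (B / N) ^ 2 / (B / N) ^ 2))) by (field; lra).
  rewrite !Rabs_mult, (Rabs_right (/ N ^ 2))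
    by (apply Rle_ge; left; apply Rinv_0_lt_compat, pow_lt; lra).
  apply Rmult_le_compat_l; [| exact Hq].
  apply Rmult_le_pos; [apply Rmult_le_pos; apply Rabs_pos | left; apply Rinv_0_lt_compat, pow_lt; lra].
Qed.

Lemma Psi_mult_bound :
  exists C0, 0 <= C0 /\ forall c N x1 x2 x3 x4 B, 0 < N -> 0 < B ->
    x1 + x2 + x3 + x4 = 0 ->
    Rabs x1 <= B -> Rabs x2 <= B -> Rabs x3 <= B -> Rabs x4 <= B ->
    Rabs (Psi_mult th0 c N x1 x2 x3 x4) <= Rabs c * C0 * (theta th0 N B ^ 2 / B ^ 2).
Proof.
  destruct theta_sq_second_difference as [C0 [HC0 Hdiff]].
  exists (C0 / 2). split; [lra |].
  intros c N x1 x2 x3 x4 B HN HB Hsum H1 H2 H3 H4.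
  set (r := theta th0 N B ^ 2 / B ^ 2).
  assert (Hr : 0 <= r).
  { unfold r, Rdiv. apply Rmult_le_pos; [apply pow2_ge_0 |].
    left. apply Rinv_0_lt_compat, pow_lt. lra. }
  unfold Psi_mult. destruct (Req_EM_T _ 0) as [Hd | Hd].
  { rewrite Rabs_R0. pose proof (Rabs_pos c). apply Rmult_le_pos; [|exact Hr]. nra. }
  rewrite (Gamma4_denominator x1 x2 x3 x4 Hsum) in Hd |- *.
  set (a := x1 + x2) in *. set (b := x1 + x4) in *.
  assert (Hab : 0 < Rabs (a * b)) by (apply Rabs_pos_lt; intros Z; apply Hd; rewrite Z; ring).
  pose proof (Hdiff N x1 a b B HN HB H1) as Hbound.
  replace (x1 - a) with (- x2) in Hbound by (unfold a; ring).
  replace (x1 - b) with (- x4) in Hbound by (unfold b; ring).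
  replace (- x2 - b) with x3 in Hbound by (unfold a, b in *; lra).
  rewrite !Rabs_Ropp, !theta_even in Hbound by exact HN.
  specialize (Hbound H2 H4 H3). fold r in Hbound.
  replace (theta th0 N x1 ^ 2 - theta th0 N x2 ^ 2 + theta th0 N x3 ^ 2 - theta th0 N x4 ^ 2)
    with (theta th0 N x1 ^ 2 - theta th0 N x2 ^ 2 - theta th0 N x4 ^ 2 + theta th0 N x3 ^ 2)
    by ring.
  unfold Rdiv. rewrite Rabs_mult, Rabs_mult, Rabs_inv, Rabs_mult, (Rabs_right 2) by lra.
  apply Rle_trans with (Rabs c * (C0 * Rabs (a * b) * r) * / (2 * Rabs (a * b))).
  - apply Rmult_le_compat_r; [left; apply Rinv_0_lt_compat; lra |].
    apply Rmult_le_compat_l; [apply Rabs_pos | exact Hbound].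
  - right. field. lra.
Qed.

End Theta0.

Lemma dyadic_loc_bounds (k : nat) (x : R) :
  dyadic_loc k x -> Rabs x <= 2 * 2 ^ k /\ 2 ^ k <= 1 + 2 * Rabs x.
Proof. destruct k; simpl; [pose proof (Rabs_pos x) |]; lra. Qed.

Lemma Rsum_Permutation (l l' : list R) :
  Permutation l l' -> fold_right Rplus 0 l = fold_right Rplus 0 l'.
Proof. induction 1; simpl; lra. Qed.

Lemma Rabs_le_sum_others (a b c d : R) :
  a + b + c + d = 0 -> Rabs a <= Rabs b + Rabs c + Rabs d.
Proof.
  intros H. replace a with (- (b + c + d)) by lra. rewrite Rabs_Ropp.
  pose proof (Rabs_triang (b + c) d). pose proof (Rabs_triang b c). lra.
Qed.

Definition dyadic_rearrangement (k1 k2 k3 k4 : nat) (M1 M2 M3 M4 : R) : Prop :=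
  Permutation (2 ^ k1 :: 2 ^ k2 :: 2 ^ k3 :: 2 ^ k4 :: nil) (M1 :: M2 :: M3 :: M4 :: nil) /\
  M2 <= M1 /\ M3 <= M2 /\ M4 <= M3.

Lemma dyadic_rearrangement_top (k1 k2 k3 k4 : nat) (M1 M2 M3 M4 : R) :
  dyadic_rearrangement k1 k2 k3 k4 M1 M2 M3 M4 ->
  2 ^ k1 <= M1 /\ 2 ^ k2 <= M1 /\ 2 ^ k3 <= M1 /\ 2 ^ k4 <= M1.
Proof.
  intros (HP & H21 & H32 & H43).
  assert (Hin : forall z, In z (2 ^ k1 :: 2 ^ k2 :: 2 ^ k3 :: 2 ^ k4 :: nil) -> z <= M1).
  { intros z Hz. apply (Permutation_in _ HP) in Hz.
    destruct Hz as [<- | [<- | [<- | [<- | []]]]]; lra. }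
  repeat split; apply Hin; simpl; tauto.
Qed.

Lemma dyadic_rearrangement_bottom_ge1 (k1 k2 k3 k4 : nat) (M1 M2 M3 M4 : R) :
  dyadic_rearrangement k1 k2 k3 k4 M1 M2 M3 M4 -> 1 <= M4.
Proof.
  intros (HP & _).
  assert (Hin : In M4 (2 ^ k1 :: 2 ^ k2 :: 2 ^ k3 :: 2 ^ k4 :: nil))
    by (apply (Permutation_in _ (Permutation_sym HP)); simpl; tauto).
  destruct Hin as [<- | [<- | [<- | [<- | []]]]]; apply pow_R1_Rle; lra.
Qed.

Lemma dyadic_rearrangement_top_le (x1 x2 x3 x4 : R) (k1 k2 k3 k4 : nat) (M1 M2 M3 M4 : R) :
  x1 + x2 + x3 + x4 = 0 ->
  dyadic_loc k1 x1 -> dyadic_loc k2 x2 -> dyadic_loc k3 x3 -> dyadic_loc k4 x4 ->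
  dyadic_rearrangement k1 k2 k3 k4 M1 M2 M3 M4 -> M1 <= 2 ^ 4 * M2.
Proof.
  intros Hsum D1 D2 D3 D4 Hre.
  pose proof (dyadic_rearrangement_bottom_ge1 _ _ _ _ _ _ _ _ Hre).
  destruct Hre as (HP & H21 & H32 & H43).
  pose proof (Rsum_Permutation _ _ HP) as Hsum'. simpl in Hsum'.
  assert (Hin : In M1 (2 ^ k1 :: 2 ^ k2 :: 2 ^ k3 :: 2 ^ k4 :: nil))
    by (apply (Permutation_in _ (Permutation_sym HP)); simpl; tauto).
  apply dyadic_loc_bounds in D1, D2, D3, D4.
  pose proof (Rabs_le_sum_others x1 x2 x3 x4 ltac:(lra)).
  pose proof (Rabs_le_sum_others x2 x1 x3 x4 ltac:(lra)).
  pose proof (Rabs_le_sum_others x3 x1 x2 x4 ltac:(lra)).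
  pose proof (Rabs_le_sum_others x4 x1 x2 x3 ltac:(lra)).
  simpl. destruct Hin as [<- | [<- | [<- | [<- | []]]]]; lra.
Qed.

Lemma Psi_abs_le_top_two (s : R) (th0 : R -> R) (c : R) (Vre Vim : R -> R) (M : R) :
  1 <= s -> admissible_theta0 s th0 ->
  (forall x, sqrt (Vre x ^ 2 + Vim x ^ 2) <= M) ->
  exists C, 0 < C /\
    forall (N x1 x2 x3 x4 : R) (k1 k2 k3 k4 : nat) (M1 M2 M3 M4 : R),
      1 < N -> x1 + x2 + x3 + x4 = 0 ->
      dyadic_loc k1 x1 -> dyadic_loc k2 x2 -> dyadic_loc k3 x3 -> dyadic_loc k4 x4 ->
      dyadic_rearrangement k1 k2 k3 k4 M1 M2 M3 M4 ->
      Psi_abs th0 c N Vre Vim x1 x2 x3 x4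
        <= C * / M1 ^ 2 * theta th0 N M1 * theta th0 N M2.
Proof.
  intros Hs Hadm HV.
  destruct (Psi_mult_bound s th0 Hs Hadm) as [C0 [HC0 Hmult]].
  set (Q := Rpower 4 s).
  assert (HQ : 1 <= Q) by (apply Rpower_ge1; lra).
  assert (HM : 0 <= M) by (eapply Rle_trans; [apply sqrt_pos | apply (HV 0)]).
  set (C1 := M * Rabs c * C0 * Q ^ 6 / 4).
  assert (HC1 : 0 <= C1).
  { pose proof (Rabs_pos c). pose proof (pow_le Q 6 ltac:(lra)).
    unfold C1, Rdiv. repeat apply Rmult_le_pos; lra. }
  exists (C1 + 1). split; [lra |].
  intros N x1 x2 x3 x4 k1 k2 k3 k4 M1 M2 M3 M4 HN Hsum D1 D2 D3 D4 Hre.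
  pose proof (dyadic_rearrangement_top_le _ _ _ _ _ _ _ _ _ _ _ _ Hsum D1 D2 D3 D4 Hre)
    as Htop.
  pose proof (dyadic_rearrangement_bottom_ge1 _ _ _ _ _ _ _ _ Hre).
  destruct (dyadic_rearrangement_top _ _ _ _ _ _ _ _ Hre) as (T1 & T2 & T3 & T4).
  destruct Hre as (_ & H21 & H32 & H43).
  apply dyadic_loc_bounds in D1, D2, D3, D4.
  pose proof (theta_ge1 s th0 Hadm N M1). pose proof (theta_ge1 s th0 Hadm N M2).
  pose proof (theta_double_sq_le s th0 Hs Hadm N M1 M2 ltac:(lra) ltac:(lra) H21 Htop)
    as Hsq.
  fold Q in Hsq.
  set (t1 := theta th0 N M1) in *. set (t2 := theta th0 N M2) in *.
  assert (Hm : Rabs (Psi_mult th0 c N x1 x2 x3 x4)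
               <= Rabs c * C0 * (theta th0 N (2 * M1) ^ 2 / (2 * M1) ^ 2))
    by (apply Hmult; lra).
  eapply Rle_trans; [apply (Psi_abs_le_mult _ _ _ _ _ _ _ _ _ _ HV) |].
  apply Rle_trans with (Rabs c * C0 * (Q ^ 6 * (t1 * t2) / (2 * M1) ^ 2) * M).
  - apply Rmult_le_compat_r; [exact HM |].
    eapply Rle_trans; [exact Hm |].
    apply Rmult_le_compat_l; [apply Rmult_le_pos; [apply Rabs_pos | exact HC0] |].
    unfold Rdiv. apply Rmult_le_compat_r; [left; apply Rinv_0_lt_compat, pow_lt; lra |].
    exact Hsq.
  - assert (0 <= / M1 ^ 2 * t1 * t2).
    { repeat apply Rmult_le_pos; try lra. left. apply Rinv_0_lt_compat, pow_lt. lra. }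
    apply Rle_trans with (C1 * / M1 ^ 2 * t1 * t2); [right; unfold C1; field; lra |].
    lra.
Qed.

Theorem proposition4p2 :
  forall (s : R) (th0 : R -> R) (c : R) (Vre Vim : R -> R) (M : R),
    1 <= s ->
    admissible_theta0 s th0 ->
    (forall x, sqrt (Vre x ^ 2 + Vim x ^ 2) <= M) ->
    (exists K0 C : R, 1 <= K0 /\ 0 < C /\
      forall (N x1 x2 x3 x4 : R) (k1 k2 k3 k4 : nat) (M1 M2 M3 M4 : R),
        1 < N ->
        x1 + x2 + x3 + x4 = 0 ->
        dyadic_loc k1 x1 -> dyadic_loc k2 x2 ->
        dyadic_loc k3 x3 -> dyadic_loc k4 x4 ->
        Permutation (2 ^ k1 :: 2 ^ k2 :: 2 ^ k3 :: 2 ^ k4 :: nil)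
                    (M1 :: M2 :: M3 :: M4 :: nil) ->
        M2 <= M1 -> M3 <= M2 -> M4 <= M3 ->
        K0 * M3 <= M2 ->
        Psi_abs th0 c N Vre Vim x1 x2 x3 x4
          <= C * (/ M1 ^ 2) * theta th0 N M1 * theta th0 N M2) /\
    (forall K : R, 1 <= K -> exists C : R, 0 < C /\
      forall (N x1 x2 x3 x4 : R) (k1 k2 k3 k4 : nat) (M1 M2 M3 M4 : R),
        1 < N ->
        x1 + x2 + x3 + x4 = 0 ->
        dyadic_loc k1 x1 -> dyadic_loc k2 x2 ->
        dyadic_loc k3 x3 -> dyadic_loc k4 x4 ->
        Permutation (2 ^ k1 :: 2 ^ k2 :: 2 ^ k3 :: 2 ^ k4 :: nil)
                    (M1 :: M2 :: M3 :: M4 :: nil) ->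
        M2 <= M1 -> M3 <= M2 -> M4 <= M3 ->
        M2 <= K * M3 ->
        Psi_abs th0 c N Vre Vim x1 x2 x3 x4
          <= C * (/ M1 ^ 3) * theta th0 N M1 * theta th0 N M2 * M3 * M4).
Proof.
  intros s th0 c Vre Vim M Hs Hadm HV.
  destruct (Psi_abs_le_top_two s th0 c Vre Vim M Hs Hadm HV) as [C [HC Hbound]].
  split.
  - exists 1, C. split; [lra | split; [exact HC |]].
    intros N x1 x2 x3 x4 k1 k2 k3 k4 M1 M2 M3 M4 HN Hsum D1 D2 D3 D4 HP H21 H32 H43 _.
    apply (Hbound N x1 x2 x3 x4 k1 k2 k3 k4 M1 M2 M3 M4); repeat split; assumption.
  - intros K HK. exists (2 ^ 4 * K * C). split; [nra |].
    intros N x1 x2 x3 x4 k1 k2 k3 k4 M1 M2 M3 M4 HN Hsum D1 D2 D3 D4 HP H21 H32 H43 H23.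
    assert (Hre : dyadic_rearrangement k1 k2 k3 k4 M1 M2 M3 M4) by now repeat split.
    pose proof (dyadic_rearrangement_top_le _ _ _ _ _ _ _ _ _ _ _ _ Hsum D1 D2 D3 D4 Hre).
    pose proof (dyadic_rearrangement_bottom_ge1 _ _ _ _ _ _ _ _ Hre).
    assert (HM1 : M1 <= 2 ^ 4 * K * (M3 * M4)) by nra.
    set (P := / M1 ^ 3 * theta th0 N M1 * theta th0 N M2).
    assert (HP0 : 0 <= P).
    { pose proof (theta_ge1 s th0 Hadm N M1). pose proof (theta_ge1 s th0 Hadm N M2).
      unfold P. repeat apply Rmult_le_pos; try lra.
      left. apply Rinv_0_lt_compat, pow_lt. lra. }
    eapply Rle_trans; [now apply (Hbound N x1 x2 x3 x4 k1 k2 k3 k4 M1 M2 M3 M4) |].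
    replace (C * / M1 ^ 2 * theta th0 N M1 * theta th0 N M2) with (C * P * M1)
      by (unfold P; field; lra).
    replace (2 ^ 4 * K * C * / M1 ^ 3 * theta th0 N M1 * theta th0 N M2 * M3 * M4)
      with (C * P * (2 ^ 4 * K * (M3 * M4))) by (unfold P; ring).
    apply Rmult_le_compat_l; [nra | exact HM1].
Qed.
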